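(* Let $p\ge1$, $\mathcal X=\{x\in\mathbb R^d:\|x\|_p\le1\}$, $c\in\mathbb R^d$ and $W=\Lambda=\mathrm{diag}(\lambda_1,\dots,\lambda_d)$ with $\lambda_i>0$; let $\Theta=\{\theta:\|\theta-c\|_W\le1\}$. Let $H(y)=-\sum_{i=1}^dy_i^{1/p}|c_i|-\sqrt{\sum_{i=1}^d\lambda_i^{-1}y_i^{2/p}}$ and consider $P_{C,p}$: minimize $H(y)$ over $y\in\Delta_{d-1}$. Given $y\in\Delta_{d-1}$ define $x_i=y_i^{1/p}\,\mathrm{sign}(c_i)$ and $\theta^\star=c+W^{-1}x/\|x\|_{W^{-1}}$. Then for any $\varepsilon>0$, $y$ is an $\varepsilon$-solution to $P_{C,p}$ if and only if $(x,\theta^\star)$ is an $\varepsilon$-solution to $P_B$.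
   Context: $\|z\|_M=\sqrt{z^\top Mz}$, $\|z\|_p=(\sum_i|z_i|^p)^{1/p}$. $\Delta_{d-1}=\{y\in\mathbb R^d:y_i\ge0,\sum_iy_i=1\}$. Convention $\mathrm{sign}(0)=1$. $P_B$: maximize $x^\top\theta$ over $(x,\theta)\in\mathcal X\times\Theta$; an $\varepsilon$-solution to $P_B$ is $(x,\theta)\in\mathcal X\times\Theta$ with $x^\top\theta\ge\sup_{\mathcal X\times\Theta}x'^\top\theta'-\varepsilon$; an $\varepsilon$-solution to $P_{C,p}$ is $y\in\Delta_{d-1}$ with $H(y)\le\min_{\Delta_{d-1}}H+\varepsilon$. *)

From HB Require Import structures.
From mathcomp Require Import all_boot all_order all_algebra.
From mathcomp Require Import all_classical all_reals all_analysis.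
Set Implicit Arguments. Unset Strict Implicit. Unset Printing Implicit Defensive.
Import Order.TTheory GRing.Theory Num.Theory.
Local Open Scope ring_scope.

Section Defs.
Variables (R : realType) (d : nat).

(* sign with the convention sign(0) = 1 *)
Definition sgn1 (a : R) : R := if 0 <= a then 1 else -1.

Definition lpnorm (p : R) (z : 'I_d -> R) : R :=
  powR (\sum_(i < d) powR `|z i| p) (p^-1).

Definition diagnorm (m : 'I_d -> R) (z : 'I_d -> R) : R :=
  Num.sqrt (\sum_(i < d) m i * z i ^+ 2).

Definition dotp (x y : 'I_d -> R) : R := \sum_(i < d) x i * y i.

Definition simplex (y : 'I_d -> R) : Prop :=
  (forall i, 0 <= y i) /\ \sum_(i < d) y i = 1.

Definition Xset (p : R) (x : 'I_d -> R) : Prop := lpnorm p x <= 1.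

Definition Thetaset (lam c : 'I_d -> R) (th : 'I_d -> R) : Prop :=
  diagnorm lam (fun i => th i - c i) <= 1.

Definition Hfun (p : R) (lam c : 'I_d -> R) (y : 'I_d -> R) : R :=
  - (\sum_(i < d) powR (y i) (p^-1) * `|c i|)
  - Num.sqrt (\sum_(i < d) (lam i)^-1 * powR (y i) (2 / p)).

Definition eps_sol_C (p : R) (lam c : 'I_d -> R) (eps : R) (y : 'I_d -> R) : Prop :=
  simplex y /\ forall y', simplex y' -> Hfun p lam c y <= Hfun p lam c y' + eps.

Definition eps_sol_B (p : R) (lam c : 'I_d -> R) (eps : R)
    (x th : 'I_d -> R) : Prop :=
  Xset p x /\ Thetaset lam c th /\
  forall x' th', Xset p x' -> Thetaset lam c th' ->
    dotp x' th' - eps <= dotp x th.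

Definition x_of (p : R) (c y : 'I_d -> R) : 'I_d -> R :=
  fun i => powR (y i) (p^-1) * sgn1 (c i).

Definition theta_star (lam c x : 'I_d -> R) : 'I_d -> R :=
  fun i => c i + ((lam i)^-1 * x i) / diagnorm (fun j => (lam j)^-1) x.

End Defs.

From HB Require Import structures.
From mathcomp Require Import all_boot all_order all_algebra.
From mathcomp Require Import all_classical all_reals all_analysis.
From mathcomp Require Import ring lra.
Import Order.TTheory GRing.Theory Num.Theory.
Set Implicit Arguments. Unset Strict Implicit. Unset Printing Implicit Defensive.
Local Open Scope ring_scope.

(* The support function of the ellipsoid Theta is
   sigma(x) = x.c + ||x||_{W^-1}, attained at theta*(x) (Cauchy-Schwarz), so
   sup_{X x Theta} x.theta = sup_X sigma.  For y in the simplex, x(y) lies in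
   X and sigma(x(y)) = -H(y); conversely every x in X is dominated
   coordinatewise in modulus by some x(y), and sigma(x) <= sigma(x(y)) = -H(y).
   So both problems have the same optimal value and y |-> (x(y), theta*(x(y)))
   turns objective values H(y) into -H(y), which transfers eps-optimality in
   both directions. *)

Section Sign.
Variable R : realType.

Lemma sqr_sgn1 (a : R) : sgn1 a ^+ 2 = 1.
Proof. by rewrite /sgn1; case: ifP => _; rewrite ?sqrrN expr1n. Qed.

Lemma normr_sgn1 (a : R) : `|sgn1 a| = 1.
Proof. by rewrite /sgn1; case: ifP => _; rewrite ?normrN normr1. Qed.

Lemma normrE_sgn1 (a : R) : `|a| = sgn1 a * a.
Proof.
rewrite /sgn1; case: ifP => [a_ge0|a_lt0]; first by rewrite mul1r ger0_norm.
by rewrite ltr0_norm ?mulN1r // ltNge a_lt0.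
Qed.

End Sign.

Section PowR.
Variable R : realType.

Lemma powRK (a r : R) : r != 0 -> 0 <= a -> (a `^ r) `^ r^-1 = a.
Proof. by move=> r0 a0; rewrite -powRrM mulfV // powRr1. Qed.

Lemma powRVK (a r : R) : r != 0 -> 0 <= a -> (a `^ r^-1) `^ r = a.
Proof. by move=> r0 a0; rewrite -powRrM mulVf // powRr1. Qed.

Lemma powR_2div (a r : R) : a `^ (2 / r) = (a `^ r^-1) ^+ 2.
Proof. by rewrite mulrC powRrM powR_mulrn // powR_ge0. Qed.

End PowR.

Section DiagNorm.
Variables (R : realType) (d : nat) (m : 'I_d -> R).
Hypothesis m_ge0 : forall i, 0 <= m i.

Lemma sqr_diagnorm (z : 'I_d -> R) :
  diagnorm m z ^+ 2 = \sum_(i < d) m i * z i ^+ 2.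
Proof. by rewrite sqr_sqrtr // sumr_ge0 // => i _; rewrite mulr_ge0 ?sqr_ge0. Qed.

Lemma diagnorm_le (z z' : 'I_d -> R) :
  (forall i, `|z i| <= `|z' i|) -> diagnorm m z <= diagnorm m z'.
Proof.
move=> z_le; rewrite ler_sqrt; last first.
  by apply: sumr_ge0 => i _; rewrite mulr_ge0 ?sqr_ge0.
apply: ler_sum => i _; rewrite ler_wpM2l // -[z i ^+ 2]real_normK ?num_real //.
by rewrite -[z' i ^+ 2]real_normK ?num_real // lerXn2r ?nnegrE.
Qed.

End DiagNorm.

Section Ellipsoid.
Variables (R : realType) (d : nat) (c lam : 'I_d -> R).
Hypothesis lam_gt0 : forall i, 0 < lam i.

Let ilam := fun i => (lam i)^-1.
Let ilam_ge0 i : 0 <= ilam i. Proof. by rewrite invr_ge0 ltW. Qed.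

Lemma dotp_le_dual_diagnorm (a u : 'I_d -> R) :
  diagnorm lam u <= 1 -> dotp a u <= diagnorm ilam a.
Proof.
move=> u_in; set N := diagnorm ilam a.
have u_le1 : \sum_(i < d) lam i * u i ^+ 2 <= 1.
  by rewrite -sqr_diagnorm ?exprn_ile1 ?sqrtr_ge0 // => i; rewrite ltW.
have N_sqr : N ^+ 2 = \sum_(i < d) ilam i * a i ^+ 2 := sqr_diagnorm ilam_ge0 a.
have [N0|N_neq0] := eqVneq N 0.
  have a_terms0 : \sum_(i < d) ilam i * a i ^+ 2 = 0 by rewrite -N_sqr N0 expr0n.
  rewrite N0 /dotp big1 // => i _.
  have /eqP := psumr_eq0P (fun i _ => mulr_ge0 (ilam_ge0 i) (sqr_ge0 (a i)))
    a_terms0 (i := i) isT.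
  by rewrite mulf_eq0 invr_eq0 gt_eqF //= sqrf_eq0 => /eqP ->; rewrite mul0r.
have N_gt0 : 0 < N by rewrite lt_def N_neq0 sqrtr_ge0.
have : 2 * dotp a u <= N ^+ 2 / N + N * \sum_(i < d) lam i * u i ^+ 2.
  rewrite N_sqr mulr_suml mulr_sumr /dotp mulr_sumr -big_split /=.
  apply: ler_sum => i _; rewrite -subr_ge0.
  (* AM-GM *)
  have -> : ilam i * a i ^+ 2 / N + N * (lam i * u i ^+ 2) - 2 * (a i * u i) =
      ilam i / N * (a i - lam i * N * u i) ^+ 2.
    by rewrite /ilam; field; rewrite !gt_eqF.
  by rewrite mulr_ge0 ?sqr_ge0 ?divr_ge0 ?ilam_ge0 ?(ltW N_gt0).
have := ler_piMr (ltW N_gt0) u_le1.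
rewrite expr2 mulfK //; lra.
Qed.

Definition Theta_support (x : 'I_d -> R) : R := dotp x c + diagnorm ilam x.

Lemma dotp_le_Theta_support (x th : 'I_d -> R) :
  Thetaset lam c th -> dotp x th <= Theta_support x.
Proof.
move=> /(dotp_le_dual_diagnorm x); rewrite /Theta_support /dotp.
have -> : \sum_(i < d) x i * th i =
    \sum_(i < d) x i * c i + \sum_(i < d) x i * (th i - c i).
  by rewrite -big_split /=; apply: eq_bigr => i _; ring.
by rewrite lerD2l.
Qed.

Lemma theta_star_subr (x : 'I_d -> R) i :
  theta_star lam c x i - c i = ilam i * x i / diagnorm ilam x.
Proof. by rewrite /theta_star addrAC subrr add0r. Qed.

Lemma Thetaset_theta_star (x : 'I_d -> R) : Thetaset lam c (theta_star lam c x).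
Proof.
rewrite /Thetaset; set N := diagnorm ilam x.
have [N0|N_neq0] := eqVneq N 0.
  rewrite /diagnorm big1 ?sqrtr0 // => i _.
  by rewrite theta_star_subr -/N N0 invr0 !mulr0 expr0n mulr0.
rewrite /diagnorm.
have -> : \sum_(i < d) lam i * (theta_star lam c x i - c i) ^+ 2 =
    (\sum_(i < d) ilam i * x i ^+ 2) / N ^+ 2.
  rewrite mulr_suml; apply: eq_bigr => i _.
  by rewrite theta_star_subr -/N /ilam; field; rewrite N_neq0 gt_eqF.
by rewrite -(sqr_diagnorm ilam_ge0) -/N mulfV ?sqrtr1 ?expf_neq0.
Qed.

Lemma dotp_theta_star (x : 'I_d -> R) :
  dotp x (theta_star lam c x) = Theta_support x.
Proof.
rewrite /Theta_support /dotp; set N := diagnorm ilam x.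
have -> : \sum_(i < d) x i * theta_star lam c x i =
    \sum_(i < d) x i * c i + N ^+ 2 / N.
  rewrite (sqr_diagnorm ilam_ge0) mulr_suml -big_split /=.
  by apply: eq_bigr => i _; rewrite /theta_star -/N /ilam; ring.
congr (_ + _); have [->|N_neq0] := eqVneq N 0; first by rewrite invr0 mulr0.
by rewrite expr2 mulfK.
Qed.

End Ellipsoid.

Section SimplexParametrization.
Variables (R : realType) (d : nat) (p : R) (c lam : 'I_d -> R).

Lemma normr_x_of (y : 'I_d -> R) i : `|x_of p c y i| = y i `^ p^-1.
Proof. by rewrite /x_of normrM normr_sgn1 mulr1 ger0_norm // powR_ge0. Qed.

Lemma sqr_x_of (y : 'I_d -> R) i : x_of p c y i ^+ 2 = y i `^ (2 / p).
Proof. by rewrite powR_2div /x_of exprMn sqr_sgn1 mulr1. Qed.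

Lemma dotp_x_of (y : 'I_d -> R) :
  dotp (x_of p c y) c = \sum_(i < d) y i `^ p^-1 * `|c i|.
Proof. by apply: eq_bigr => i _; rewrite /x_of -mulrA -normrE_sgn1. Qed.

Lemma Theta_support_x_of (y : 'I_d -> R) :
  Theta_support c lam (x_of p c y) = - Hfun p lam c y.
Proof.
rewrite /Theta_support /Hfun opprB opprK [RHS]addrC dotp_x_of /diagnorm.
by congr (_ + Num.sqrt _); apply: eq_bigr => i _; rewrite sqr_x_of.
Qed.

Lemma Theta_support_le_neg_Hfun (x y : 'I_d -> R) :
  (forall i, 0 < lam i) -> (forall i, `|x i| <= y i `^ p^-1) ->
  Theta_support c lam x <= - Hfun p lam c y.
Proof.
move=> lam_gt0 x_le; rewrite -Theta_support_x_of lerD //.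
  rewrite dotp_x_of; apply: ler_sum => i _.
  by rewrite (le_trans (ler_norm _)) // normrM ler_wpM2r.
apply: diagnorm_le => i; first by rewrite invr_ge0 ltW.
by rewrite normr_x_of.
Qed.

Hypothesis p_gt0 : 0 < p.

Lemma Xset_x_of (y : 'I_d -> R) : simplex y -> Xset p (x_of p c y).
Proof.
move=> [y_ge0 y_sum1]; rewrite /Xset /lpnorm (eq_bigr y) ?y_sum1 ?powR1 //.
by move=> i _; rewrite normr_x_of powRVK ?gt_eqF.
Qed.

Lemma sum_powR_le1 (x : 'I_d -> R) : Xset p x -> \sum_(i < d) `|x i| `^ p <= 1.
Proof.
rewrite /Xset /lpnorm => x_in.
have sum_ge0 : 0 <= \sum_(i < d) `|x i| `^ p.
  by apply: sumr_ge0 => i _; exact: powR_ge0.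
have one_powR : 1 `^ p = 1 :> R by rewrite powR1.
rewrite -(powRVK (lt0r_neq0 p_gt0) sum_ge0) -one_powR.
by apply: ge0_ler_powR; rewrite ?nnegrE ?powR_ge0 ?ler01 ?(ltW p_gt0).
Qed.

Lemma simplex_dominates_Xset (x y : 'I_d -> R) : simplex y -> Xset p x ->
  exists2 y', simplex y' & forall i, `|x i| <= y' i `^ p^-1.
Proof.
move=> [y_ge0 y_sum1] /sum_powR_le1; set s := \sum_(i < d) _ => s_le1.
have s_ge0 : 0 <= 1 - s by rewrite subr_ge0.
exists (fun i => `|x i| `^ p + (1 - s) * y i).
  split=> [i|]; first by rewrite addr_ge0 ?powR_ge0 ?mulr_ge0.
  by rewrite big_split /= -mulr_sumr y_sum1 mulr1 addrC subrK.
move=> i; rewrite -{1}(powRK (lt0r_neq0 p_gt0) (normr_ge0 (x i))).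
apply: ge0_ler_powR; rewrite ?nnegrE ?invr_ge0 ?(ltW p_gt0) ?powR_ge0 //.
  by rewrite addr_ge0 ?powR_ge0 ?mulr_ge0.
by rewrite lerDl mulr_ge0.
Qed.

End SimplexParametrization.

Theorem theorem4 (R : realType) (d : nat) (p : R) (c lam : 'I_d -> R)
    (y : 'I_d -> R) (eps : R) :
  1 <= p ->
  (forall i, 0 < lam i) ->
  simplex y ->
  0 < eps ->
  eps_sol_C p lam c eps y <->
  eps_sol_B p lam c eps (x_of p c y) (theta_star lam c (x_of p c y)).
Proof.
move=> p_ge1 lam_gt0 y_simplex _.
have p_gt0 : 0 < p := lt_le_trans ltr01 p_ge1.
have value y' :
    dotp (x_of p c y') (theta_star lam c (x_of p c y')) = - Hfun p lam c y'.
  by rewrite dotp_theta_star // Theta_support_x_of.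
split=> [[_ y_opt] | [_ [_ xth_opt]]].
- split; first exact: Xset_x_of.
  split=> [|x' th' x'_in th'_in]; first exact: Thetaset_theta_star.
  have [y' y'_simplex x'_le] := simplex_dominates_Xset p_gt0 y_simplex x'_in.
  have := dotp_le_Theta_support lam_gt0 x' th'_in.
  have := Theta_support_le_neg_Hfun c lam_gt0 x'_le.
  have := y_opt y' y'_simplex.
  rewrite value; lra.
- split=> // y' y'_simplex.
  have := xth_opt _ _ (Xset_x_of c p_gt0 y'_simplex)
    (Thetaset_theta_star c lam_gt0 (x_of p c y')).
  rewrite !value; lra.
Qed.
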